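(* Let $n$ be a prime with $n\equiv 1$ or $5\pmod 6$. Then there exists a one-factorization $\mathcal{T}$ of $K_{2n}$ on the vertex set $\{0,1,\dots,2n-1\}$ such that: (1) if $n\equiv 5\pmod 6$, then $\mathcal{T}=\{\mathcal{T}_{i,j}: 1\le i\le \frac{2n-1}{3},\ 1\le j\le 3\}$, where $\mathcal{T}_{i,1}\cup\mathcal{T}_{i,2}\cup\mathcal{T}_{i,3}=\mathcal{A}_i\cup\mathcal{B}_i\cup\mathcal{D}_{i-1}$ for $1\le i\le\frac{n-1}{2}$, and $\mathcal{T}_{i,1}=\mathcal{D}_{3i-n-2}$, $\mathcal{T}_{i,2}=\mathcal{D}_{3i-n-1}$, $\mathcal{T}_{i,3}=\mathcal{D}_{3i-n}$ for $\frac{n+1}{2}\le i\le\frac{2n-1}{3}$; (2) if $n\equiv 1\pmod 6$, then $\mathcal{T}=\{\mathcal{T}_{i,j}: 1\le i\le\frac{n-1}{2},\ 1\le j\le 3\}\cup\{\mathcal{D}_i:\frac{n-1}{2}\le i\le n-1\}$, where $\mathcal{T}_{i,1}\cup\mathcal{T}_{i,2}\cup\mathcal{T}_{i,3}=\mathcal{A}_i\cup\mathcal{B}_i\cup\mathcal{D}_{i-1}$ for $1\le i\le \frac{n-1}{2}$.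
   Context: For $1\le i\le \frac{n-1}{2}$: $\mathcal{A}_i=\{\{x,y\}: x,y\in\{0,\dots,n-1\},\ y-x\equiv i \pmod n\}$ and $\mathcal{B}_i=\{\{x,y\}: x,y\in\{n,\dots,2n-1\},\ y-x\equiv i\pmod n\}$. For $0\le i\le n-1$: $\mathcal{D}_i=\{\{x,y\}: 0\le x\le n-1,\ n\le y\le 2n-1,\ y-x\equiv i\pmod n\}$. A one-factor of $K_{2n}$ is a perfect matching; a one-factorization is a partition of the edge set of $K_{2n}$ into $2n-1$ one-factors. *)

From mathcomp Require Import all_boot.
Set Implicit Arguments. Unset Strict Implicit. Unset Printing Implicit Defensive.

Notation vtx n := ('I_(2 * n)).

Definition is_edge n (e : {set vtx n}) : bool := #|e| == 2.

Definition Aset n (i : nat) : {set {set vtx n}} :=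
  [set e | [exists x : vtx n, exists y : vtx n,
     [&& x < n, y < n, (x + i) %% n == y %% n & e == [set x; y]]]].

Definition Bset n (i : nat) : {set {set vtx n}} :=
  [set e | [exists x : vtx n, exists y : vtx n,
     [&& n <= x, n <= y, (x + i) %% n == y %% n & e == [set x; y]]]].

Definition Dset n (i : nat) : {set {set vtx n}} :=
  [set e | [exists x : vtx n, exists y : vtx n,
     [&& x < n, n <= y, (x + i) %% n == y %% n & e == [set x; y]]]].

Definition one_factor n (F : {set {set vtx n}}) : Prop :=
  (forall e, e \in F -> is_edge e) /\
  (forall v : vtx n, #|[set e in F | v \in e]| = 1).

Definition one_factorization n (T : seq {set {set vtx n}}) : Prop :=
  size T = (2 * n).-1 /\
  (forall F, F \in T -> one_factor F) /\
  (forall e : {set vtx n}, is_edge e -> count (fun F : {set {set vtx n}} => e \in F) T = 1).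

From mathcomp Require Import all_boot zify.
Set Implicit Arguments. Unset Strict Implicit. Unset Printing Implicit Defensive.

(* A proper colouring of the edges of K_2n with 2n - 1 colours is a one-factorization: each
   colour class is a perfect matching because every vertex sees all 2n - 1 colours.  The classes D_d with (n - 1)/2 <= d < n are perfect matchings and get a
   colour each.  For 1 <= i <= (n - 1)/2 the graph A_i + B_i + D_(i-1) is 3-regular and gets
   three colours: an A_i edge {x, x + i} is coloured 2 if it wraps around (x + i >= n) and by
   the parity of x / i otherwise, so the colours alternate along x, x + i, x + 2i, ...; the
   map x |-> n + x + i - 1 (the D_(i-1) partner of x) carries A_i onto B_i, and B_i is
   coloured through it; the D_(i-1) edge at x gets the colour missing at x.  This uses
   (n - 1)/2 * 3 + (n + 1)/2 = 2n - 1 colours.  Only the oddness of n matters, not its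
   primality; for n = 5 (mod 6) the D classes are regrouped into the triples T_(i,1..3). *)

Section EdgeColoring.
Variable V : finType.

Definition edge_set (r : rel V) : {set {set V}} :=
  [set e | [exists x, exists y, r x y && (e == [set x; y])]].

Lemma edge_setP (r : rel V) e :
  reflect (exists x y, r x y /\ e = [set x; y]) (e \in edge_set r).
Proof.
rewrite inE; apply: (iffP existsP) => [[x /existsP [y /andP [rxy /eqP ->]]]|[x [y [rxy ->]]]].
  by exists x, y.
by exists x; apply/existsP; exists y; rewrite rxy eqxx.
Qed.

Lemma edge_setU (r1 r2 : rel V) :
  edge_set r1 :|: edge_set r2 = edge_set (fun u v => r1 u v || r2 u v).
Proof.
apply/setP => e; rewrite in_setU; apply/idP/idP.
- by case/orP => /edge_setP [x [y [rxy ->]]]; apply/edge_setP; exists x, y; rewrite rxy ?orbT.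
- move=> /edge_setP [x [y [/orP [] rxy ->]]]; apply/orP; [left|right];
  by apply/edge_setP; exists x, y.
Qed.

Lemma edge_set_sub (r1 r2 : rel V) :
  (forall u v, r1 u v -> r2 u v || r2 v u) -> {subset edge_set r1 <= edge_set r2}.
Proof.
move=> r12 e /edge_setP [x [y [rxy ->]]]; apply/edge_setP.
by case/orP: (r12 _ _ rxy) => ryx; [exists x, y | exists y, x; rewrite setUC].
Qed.

Lemma eq_edge_set (r1 r2 : rel V) :
  (forall u v, r1 u v -> r2 u v || r2 v u) ->
  (forall u v, r2 u v -> r1 u v || r1 v u) -> edge_set r1 = edge_set r2.
Proof. by move=> r12 r21; apply/setP => e; apply/idP/idP; apply: edge_set_sub. Qed.

Variables (K : eqType) (col : V -> V -> K).
Hypothesis col_sym : forall u v, u != v -> col u v = col v u.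
Hypothesis col_inj : forall u v v', u != v -> u != v' -> col u v = col u v' -> v = v'.

Definition color_class (k : K) := edge_set (fun u v => (u != v) && (col u v == k)).

Lemma mem_color_class (u v : V) k :
  u != v -> ([set u; v] \in color_class k) = (col u v == k).
Proof.
move=> uv; apply/idP/idP => [|/eqP <-]; last by apply/edge_setP; exists u, v; rewrite uv eqxx.
move=> /edge_setP [x [y [/andP [xy /eqP <-] Exy]]].
have /set2P u_xy : u \in [set x; y] by rewrite -Exy set21.
have /set2P v_xy : v \in [set x; y] by rewrite -Exy set22.
by move: uv; case: u_xy => ->; case: v_xy => ->; rewrite ?eqxx // => /col_sym ->.
Qed.

Variable palette : seq K.
Hypothesis palette_uniq : uniq palette.
Hypothesis size_palette : size palette = #|V|.-1.
Hypothesis col_palette : forall u v, u != v -> col u v \in palette.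

(* [col u] maps the #|V|.-1 other vertices injectively into a palette of the same size. *)
Lemma col_onto u k : k \in palette -> exists2 v, u != v & col u v = k.
Proof.
set s := [seq col u v | v <- enum [set~ u]].
have s_uniq : uniq s.
  rewrite map_inj_in_uniq ?enum_uniq // => v v'.
  by rewrite !mem_enum !inE => vu v'u; apply: col_inj; rewrite eq_sym.
have s_sub : {subset s <= palette}.
  by move=> c /mapP [v]; rewrite mem_enum !inE eq_sym => /col_palette + ->.
have [|_ <-] := uniq_min_size s_uniq s_sub.
  by rewrite size_map -cardE cardsC1 size_palette.
by move=> /mapP [v]; rewrite mem_enum !inE eq_sym; exists v.
Qed.

Lemma color_class_regular k w : k \in palette ->
  #|[set e in color_class k | w \in e]| = 1.
Proof.
move=> /(col_onto w) [v wv col_wv].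
suff -> : [set e in color_class k | w \in e] = [set [set w; v]] by rewrite cards1.
apply/setP => e; rewrite in_set in_set1; apply/idP/idP => [|/eqP ->]; last first.
  by rewrite set21 andbT mem_color_class // col_wv.
case/andP=> /edge_setP [x [y [/andP [xy /eqP col_xy] ->]]] /set2P [] ?; subst w.
  by rewrite (col_inj xy wv (etrans col_xy (esym col_wv))).
rewrite col_sym // in col_xy; rewrite eq_sym in xy.
by rewrite (col_inj xy wv (etrans col_xy (esym col_wv))) setUC.
Qed.

Lemma count_color_class (e : {set V}) : #|e| == 2 ->
  count (fun F : {set {set V}} => e \in F) (map color_class palette) = 1.
Proof.
case/cards2P=> [x [y [xy ->]]]; rewrite count_map.
rewrite (eq_count (a2 := pred1 (col x y))) => [|k]; last by rewrite /= mem_color_class // eq_sym.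
by rewrite count_uniq_mem // col_palette.
Qed.

End EdgeColoring.

Lemma one_factorization_color_classes n (K : eqType) (col : vtx n -> vtx n -> K)
    (palette : seq K) :
  (forall u v, u != v -> col u v = col v u) ->
  (forall u v v', u != v -> u != v' -> col u v = col u v' -> v = v') ->
  uniq palette -> size palette = (2 * n).-1 ->
  (forall u v, u != v -> col u v \in palette) ->
  one_factorization (map (color_class col) palette).
Proof.
move=> col_sym col_inj p_uniq p_size col_p.
have p_size' : size palette = #|vtx n|.-1 by rewrite card_ord.
split; first by rewrite size_map.
split; last by move=> e; apply: (count_color_class col_sym).
move=> F /mapP [k kp ->]; split=> [e /edge_setP [x [y [/andP [xy _] ->]]]|w].
  by rewrite /is_edge cards2 xy.
have regular := color_class_regular col_sym col_inj p_size' col_p w kp.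
exact: regular.
Qed.

Ltac case_ifs := repeat match goal with |- context [if ?b then _ else _] =>
  lazymatch b with context [if _ then _ else _] => fail | _ => let E := fresh "E" in case E: b => /= end end.

Section ModularArithmetic.
Variable n : nat.

Definition addm x i := if x + i < n then x + i else x + i - n.
Definition subm x i := if i <= x then x - i else x + n - i.

Lemma addm_modn x i : x < n -> i < n -> (x + i) %% n = addm x i.
Proof.
move=> ltxn ltin; rewrite /addm; case: ifP => [|/negbT]; first exact: modn_small.
rewrite -leqNgt => lenxi.
by rewrite -{1}(subnK lenxi) modnDr modn_small //; lia.
Qed.

Lemma modn_shift x : n <= x < 2 * n -> x %% n = x - n.
Proof. by move=> lim; rewrite -{1}(subnK (proj1 (andP lim))) modnDr modn_small //; lia. Qed.

Lemma addm_modn_shift x i : n <= x < 2 * n -> i < n -> (x + i) %% n = addm (x - n) i.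
Proof.
move=> lim ltin; have -> : x + i = (x - n + i) + n by lia.
by rewrite modnDr addm_modn //; lia.
Qed.

Lemma subm_lt x i : x < n -> i < n -> subm x i < n.
Proof. by move=> *; rewrite /subm; case_ifs; lia. Qed.

Lemma subm_gt0 x y : x < n -> y < n -> x != y -> 0 < subm y x.
Proof. by move=> ? ? /eqP ?; rewrite /subm; case_ifs; lia. Qed.

Lemma submK x y : x < n -> y < n -> addm x (subm y x) = y.
Proof. by move=> *; rewrite /addm /subm; case_ifs; lia. Qed.

Lemma subm_subm x y : x < n -> y < n -> subm y (subm y x) = x.
Proof. by move=> *; rewrite /subm; case_ifs; lia. Qed.

Lemma subm_opp x y : x < n -> y < n -> x != y -> subm x (n - subm y x) = y.
Proof. by move=> ? ? /eqP ?; rewrite /subm; case_ifs; lia. Qed.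

Lemma submC x y : x < n -> y < n -> x != y -> subm x y = n - subm y x.
Proof. by move=> ? ? /eqP ?; rewrite /subm; case_ifs; lia. Qed.

Lemma submAC x i j : x < n -> i < n -> j < n -> subm (subm x i) j = subm (subm x j) i.
Proof. by move=> *; rewrite /subm; case_ifs; lia. Qed.

End ModularArithmetic.

Section BlockColoring.
Variable n : nat.

(* Colours 0, 1, 2 of the A_i edge {x, x + i} and of the D_(i-1) edge at x. *)
Definition colA i x := if n <= x + i then 2 else (x %/ i) %% 2.
Definition colD i x := if x < i then 1 else if n <= x + i then (x %/ i) %% 2 else 2.

Lemma colA_lt3 i x : colA i x < 3.
Proof. by rewrite /colA; case: ifP => // _; apply: leq_trans (ltn_pmod _ _) _. Qed.

Lemma colD_lt3 i x : colD i x < 3.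
Proof. by rewrite /colD; do 2?case: ifP => //; move=> *; apply: leq_trans (ltn_pmod _ _) _. Qed.

Lemma block_colors_distinct i z : 1 <= i <= (n - 1) %/ 2 -> z < n ->
  [/\ colA i z != colA i (subm n z i), colD i z != colA i z
    & colD i z != colA i (subm n z i)].
Proof.
move=> lim ltzn; rewrite /colA /colD /subm.
case: (ltnP z i) => [ltzi|leiz].
  by rewrite (divn_small ltzi); case_ifs; split; apply/eqP; lia.
have -> : z %/ i = (z - i) %/ i + 1 by rewrite -divnDMl ?mul1n ?subnK //; lia.
by move: ((z - i) %/ i) => q; case_ifs; split; apply/eqP; lia.
Qed.

End BlockColoring.

Section Factorization.
Variable n : nat.
Hypothesis n_odd : odd n.
Local Notation h := ((n - 1) %/ 2).
Local Notation addm := (addm n).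
Local Notation subm := (subm n).
Local Notation colA := (colA n).
Local Notation colD := (colD n).

Definition pos (u : vtx n) : nat := if u < n then (u : nat) else u - n.

(* The top vertex whose A_i colours the vertex u copies in block i. *)
Definition anchor i (u : vtx n) : nat := if u < n then (u : nat) else subm (u - n) i.-1.

Definition block_label (k : nat * nat) := (1 <= k.1 <= h) && (1 <= k.2 <= 3).

(* Colour (i, c), 1 <= c <= 3, stands for T_(i,c) and colour (d, 0) for D_d. *)
Definition color (u v : vtx n) : nat * nat :=
  if (u < n) == (v < n) then
    let d := subm (pos v) (pos u) in
    if d <= h then (d, (colA d (anchor d u)).+1)
    else (n - d, (colA (n - d) (anchor (n - d) v)).+1)
  else
    let x := if u < n then pos u else pos v in
    let y := if u < n then pos v else pos u in
    let d := subm y x in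
    if d < h then (d.+1, (colD d.+1 x).+1) else (d, 0).

Definition partner (u : vtx n) (k : nat * nat) : nat :=
  if block_label k then
    let i := k.1 in let z := anchor i u in
    if k.2 == (colA i z).+1 then (if u < n then addm (pos u) i else n + addm (pos u) i)
    else if k.2 == (colA i (subm z i)).+1 then
      (if u < n then subm (pos u) i else n + subm (pos u) i)
    else (if u < n then n + addm (pos u) i.-1 else z)
  else if u < n then n + addm (pos u) k.1 else subm (pos u) k.1.

Lemma pos_lt (u : vtx n) : pos u < n.
Proof. by have := ltn_ord u; rewrite /pos; case: ifP; lia. Qed.

Lemma pos_inj (u v : vtx n) : (u < n) = (v < n) -> pos u = pos v -> u = v.
Proof.
move=> side_uv Ep; apply: val_inj => /=.
by have := ltn_ord u; have := ltn_ord v; move: Ep; rewrite /pos -side_uv; case_ifs; lia.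
Qed.

Lemma block_labelE i c : block_label (i, c.+1) = (1 <= i <= h) && (c < 3).
Proof. by []. Qed.

Lemma partner_color_top (u v : vtx n) : u < n -> v < n -> u != v -> partner u (color u v) = v.
Proof.
move=> ltu ltv uv; rewrite /color /pos ltu ltv /=.
have d0 := subm_gt0 ltu ltv uv; have dn := subm_lt ltv ltu.
case: ifP => le_dh; rewrite /partner /anchor /pos ltu ?ltv block_labelE colA_lt3 andbT /=.
  by rewrite ifT ?eqxx ?submK //; lia.
set i := n - subm v u; have lim : 1 <= i <= h by lia.
have [ne _ _] := block_colors_distinct lim ltu; rewrite subm_opp // in ne.
rewrite ifT; last lia.
by rewrite eqSS eq_sym (negbTE ne) /= subm_opp // eqxx.
Qed.

Lemma partner_color_bot (u v : vtx n) : n <= u -> n <= v -> u != v ->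
  partner u (color u v) = v.
Proof.
move=> leu lev /eqP uv; have := ltn_ord u; have := ltn_ord v => ? ?.
have ltu : u - n < n by lia.
have ltv : v - n < n by lia.
have ne : u - n != v - n by apply/eqP => E; apply: uv; apply: val_inj => /=; lia.
have d0 := subm_gt0 ltu ltv ne; have dn := subm_lt ltv ltu.
have [gtu gtv] : (u < n) = false /\ (v < n) = false by split; lia.
rewrite /color /pos gtu gtv /=.
case: ifP => le_dh; rewrite /partner /anchor /pos gtu ?gtv block_labelE colA_lt3 andbT /=.
  by rewrite ifT ?eqxx ?submK //; lia.
set i := n - subm (v - n) (u - n); have lim : 1 <= i <= h by lia.
have ltz : subm (u - n) i.-1 < n by apply: subm_lt; lia.
have [neA _ _] := block_colors_distinct lim ltz.
have Ev : subm (u - n) i = v - n by apply: subm_opp.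
have -> : subm (v - n) i.-1 = subm (subm (u - n) i.-1) i by rewrite -Ev submAC //; lia.
rewrite ifT; last lia.
by rewrite eqSS eq_sym (negbTE neA) /= eqxx Ev; lia.
Qed.

Lemma partner_color_topbot (u v : vtx n) : u < n -> n <= v -> partner u (color u v) = v.
Proof.
move=> ltu lev; have := ltn_ord v => ?.
have gtv : (v < n) = false by lia.
rewrite /color /pos ltu gtv /=; set d := subm (v - n) u.
have dn : d < n by apply: subm_lt; lia.
case: ifP => lt_dh; rewrite /partner /anchor /pos ltu; last first.
  by rewrite /block_label andbF submK //; lia.
have lim : 1 <= d.+1 <= h by lia.
have [_ ne2 ne3] := block_colors_distinct lim ltu.
rewrite block_labelE colD_lt3 andbT lim /= !eqSS (negbTE ne2) (negbTE ne3) /=.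
by rewrite submK //; lia.
Qed.

Lemma partner_color_bottop (u v : vtx n) : n <= u -> v < n -> partner u (color u v) = v.
Proof.
move=> leu ltv; have := ltn_ord u => ?.
have gtu : (u < n) = false by lia.
rewrite /color /pos gtu ltv /=; set d := subm (u - n) v.
have dn : d < n by apply: subm_lt; lia.
have Ez : subm (u - n) d = v by apply: subm_subm; lia.
case: ifP => lt_dh; rewrite /partner /anchor /pos gtu; last first.
  by rewrite /block_label andbF Ez.
have lim : 1 <= d.+1 <= h by lia.
have [_ ne2 ne3] := block_colors_distinct lim ltv.
by rewrite block_labelE colD_lt3 andbT lim /= Ez !eqSS (negbTE ne2) (negbTE ne3).
Qed.

Lemma partner_color u v : u != v -> partner u (color u v) = v.
Proof.
case: (ltnP u n) => [ltu|leu]; case: (ltnP v n) => [ltv|lev] uv.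
- exact: partner_color_top.
- exact: partner_color_topbot.
- exact: partner_color_bottop.
- exact: partner_color_bot.
Qed.

Lemma color_sym u v : u != v -> color u v = color v u.
Proof.
move=> uv; rewrite /color.
case top_u: (u < n); case top_v: (v < n) => //=;
  have ne : pos u != pos v by apply: contra uv => /eqP /pos_inj -> //; rewrite top_u top_v.
all: rewrite (submC (pos_lt u) (pos_lt v) ne).
all: have := subm_gt0 (pos_lt u) (pos_lt v) ne; have := subm_lt (pos_lt v) (pos_lt u).
all: move: (subm (pos v) (pos u)) => d ? ?.
all: by case: ifP => ?; case: ifP => ?; rewrite ?subKn //; lia.
Qed.

Lemma color_inj u v v' : u != v -> u != v' -> color u v = color u v' -> v = v'.
Proof.
move=> uv uv' E; apply: val_inj => /=.
by rewrite -(partner_color uv) -(partner_color uv') E.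
Qed.

Lemma color_cases u v : u != v ->
  block_label (color u v) \/ exists2 d, h <= d < n & color u v = (d, 0).
Proof.
move=> uv; rewrite /color; have ltu := pos_lt u; have ltv := pos_lt v.
case top_u: (u < n); case top_v: (v < n) => /=.
1,4: have ne : pos u != pos v by apply: contra uv => /eqP /pos_inj -> //; rewrite top_u top_v.
1,2: have := subm_gt0 ltu ltv ne; have := subm_lt ltv ltu.
1,2: by left; case: ifP => ?; rewrite block_labelE colA_lt3 andbT; lia.
1: have := subm_lt ltv ltu.
2: have := subm_lt ltu ltv.
all: case: ifP => ? ?; first by left; rewrite block_labelE colD_lt3 andbT; lia.
all: by right; eexists; last reflexivity; lia.
Qed.

Definition relA i (u v : vtx n) := [&& u < n, v < n & (u + i) %% n == v %% n].
Definition relB i (u v : vtx n) := [&& n <= u, n <= v & (u + i) %% n == v %% n].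
Definition relD i (u v : vtx n) := [&& u < n, n <= v & (u + i) %% n == v %% n].
Definition relT i u v := [|| relA i u v, relB i u v | relD (i - 1) u v].

Lemma AsetE i : Aset n i = edge_set (relA i).
Proof. by apply/setP => e; rewrite !inE; do 2 apply: eq_existsb => ?; rewrite -!andbA. Qed.
Lemma BsetE i : Bset n i = edge_set (relB i).
Proof. by apply/setP => e; rewrite !inE; do 2 apply: eq_existsb => ?; rewrite -!andbA. Qed.
Lemma DsetE i : Dset n i = edge_set (relD i).
Proof. by apply/setP => e; rewrite !inE; do 2 apply: eq_existsb => ?; rewrite -!andbA. Qed.

Lemma relT_top i (u v : vtx n) : u < n -> v < n -> i < n -> relT i u v = (addm u i == v).
Proof.
move=> ltu ltv lti; rewrite /relT /relA /relB /relD ltu ltv /=.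
have -> : (n <= v) = false by lia.
by rewrite addm_modn // (modn_small ltv) !andbF !orbF.
Qed.

Lemma relT_bot i (u v : vtx n) : n <= u -> n <= v -> i < n ->
  relT i u v = (addm (u - n) i == v - n).
Proof.
move=> leu lev lti; have := ltn_ord u; have := ltn_ord v => ? ?.
rewrite /relT /relA /relB /relD leu lev; have -> : (u < n) = false by lia.
by rewrite /= orbF addm_modn_shift ?modn_shift //; lia.
Qed.

Lemma relT_topbot i (u v : vtx n) : u < n -> n <= v -> 1 <= i <= n ->
  relT i u v = (addm u (i - 1) == v - n).
Proof.
move=> ltu lev lim; have := ltn_ord v => ?.
rewrite /relT /relA /relB /relD ltu lev.
have -> : (n <= u) = false by lia.
have -> : (v < n) = false by lia.
by rewrite /= addm_modn ?modn_shift //; lia.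
Qed.

Lemma relT_bottop i (u v : vtx n) : n <= u -> v < n -> relT i u v = false.
Proof.
move=> leu ltv; rewrite /relT /relA /relB /relD.
have -> : (u < n) = false by lia.
have -> : (n <= v) = false by lia.
by rewrite andbF.
Qed.

Lemma relT_color u v : u != v -> block_label (color u v) ->
  relT (color u v).1 u v || relT (color u v).1 v u.
Proof.
move=> /eqP uv; have {}uv : (u : nat) <> v by move=> E; apply: uv; apply: val_inj.
have := ltn_ord u; have := ltn_ord v.
rewrite /color /pos /anchor /block_label.
case top_u: (u < n); case top_v: (v < n) => //= ? ?; case: ifP => ? /= lab.
- by rewrite !relT_top //; try lia; rewrite /addm /subm; case_ifs; lia.
- by rewrite !relT_top //; try lia; rewrite /addm /subm; case_ifs; lia.
- rewrite relT_topbot ?relT_bottop //; try lia.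
  by rewrite orbF /addm /subm; case_ifs; lia.
- by lia.
- rewrite relT_bottop ?relT_topbot //=; try lia.
  by rewrite /addm /subm; case_ifs; lia.
- by lia.
- by rewrite !relT_bot //; try lia; rewrite /addm /subm; case_ifs; lia.
- by rewrite !relT_bot //; try lia; rewrite /addm /subm; case_ifs; lia.
Qed.

Ltac bound_colors := repeat match goal with
  | |- context [colA ?a ?b] => have := colA_lt3 n a b; move: (colA a b) => ?
  | |- context [colD ?a ?b] => have := colD_lt3 n a b; move: (colD a b) => ?
  end.

Lemma color_relT i u v : 1 <= i <= h -> relT i u v ->
  (u != v) && (color u v \in [:: (i, 1); (i, 2); (i, 3)]).
Proof.
move=> lim; have := ltn_ord u; have := ltn_ord v => ? ?.
rewrite /color /pos /anchor -val_eqE /=.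
case top_u: (u < n); case top_v: (v < n) => /=.
- rewrite relT_top //; try lia; move/eqP => <-.
  case: ifP; bound_colors; rewrite !inE !xpair_eqE /addm /subm; case_ifs; lia.
- rewrite relT_topbot //; try lia; move/eqP => Ev.
  have -> : (u : nat) != v by apply/eqP; lia.
  rewrite -Ev; case: ifP; bound_colors; rewrite !inE !xpair_eqE /addm /subm; case_ifs; lia.
- by rewrite relT_bottop //; lia.
- rewrite relT_bot //; try lia; move/eqP => Ev.
  have -> : (u : nat) != v by apply/eqP => E; move: Ev; rewrite E /addm; case_ifs; lia.
  rewrite -Ev; case: ifP; bound_colors; rewrite !inE !xpair_eqE /addm /subm; case_ifs; lia.
Qed.

Lemma relD_tb j (u v : vtx n) : u < n -> n <= v -> j < n -> relD j u v = (addm u j == v - n).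
Proof.
move=> hu hv hj; have := ltn_ord v => h2.
by rewrite /relD hu hv /= addm_modn // modn_shift ?hv.
Qed.

Lemma relD_color d u v : color u v = (d, 0) -> relD d u v || relD d v u.
Proof.
have := ltn_ord u; have := ltn_ord v => ? ?.
rewrite /color /pos; case top_u: (u < n); case top_v: (v < n) => /=; case: ifP => // _ [<-].
  by rewrite relD_tb ?top_u ?submK ?subm_lt //; lia.
by rewrite orbC relD_tb ?top_v ?submK ?subm_lt //; lia.
Qed.

Lemma color_relD d u v : h <= d < n -> relD d u v -> (u != v) && (color u v == (d, 0)).
Proof.
move=> lim /[dup] /and3P [top_u le_nv _]; have := ltn_ord v => ?.
rewrite relD_tb //; try lia; move/eqP => Ev.
have bot_v : (v < n) = false by lia.
rewrite -val_eqE /= /color /pos top_u bot_v /= -Ev.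
have -> : subm (addm u d) u = d by rewrite /addm /subm; case_ifs; lia.
have -> : (d < h) = false by lia.
by rewrite eqxx andbT; apply/eqP; lia.
Qed.

Definition factor k := color_class color k.

Lemma block_factorsU i : 1 <= i <= h ->
  factor (i, 1) :|: factor (i, 2) :|: factor (i, 3) = Aset n i :|: Bset n i :|: Dset n (i - 1).
Proof.
move=> lim; rewrite AsetE BsetE DsetE /factor /color_class !edge_setU.
apply: eq_edge_set => u v.
- move=> in_block.
  have [uv col_uv] : u != v /\ color u v \in [:: (i, 1); (i, 2); (i, 3)].
    by move: in_block; rewrite !inE; case: (u != v) => //=; rewrite orbA.
  have [lab col1] : block_label (color u v) /\ (color u v).1 = i.
    by move: col_uv; rewrite !inE /block_label; case: (color u v) => a b; rewrite !xpair_eqE /=; lia.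
  by move: (relT_color uv lab); rewrite col1 /relT -!orbA.
- move=> rel; have {}rel : relT i u v by move: rel; rewrite /relT -!orbA.
  case/andP: (color_relT lim rel) => uv; rewrite !inE uv /= => col_uv.
  by apply/orP; left; rewrite -!orbA.
Qed.

Lemma factor_D d : h <= d < n -> factor (d, 0) = Dset n d.
Proof.
move=> lim; rewrite DsetE /factor /color_class; apply: eq_edge_set => u v.
- by move=> /andP [_ /eqP]; apply: relD_color.
- by move=> /(color_relD lim) ->.
Qed.

Lemma one_factorization_factors (labels : seq (nat * nat)) :
  uniq labels -> size labels = (2 * n).-1 ->
  (forall u v, u != v -> color u v \in labels) ->
  one_factorization (map factor labels).
Proof. exact: one_factorization_color_classes color_sym color_inj. Qed.

Definition block_labels := [seq (i, j) | i <- iota 1 h, j <- iota 1 3].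

Lemma block_labels_uniq : uniq block_labels.
Proof. by apply: allpairs_uniq; rewrite ?iota_uniq // => [[a b] [c d] _ _ /= [-> ->]]. Qed.

Lemma mem_block_labels k : (k \in block_labels) = block_label k.
Proof.
case: k => i j; apply/allpairsP/idP => [[[a b] [+ + [-> ->]]]|lab].
  by rewrite !mem_iota /block_label /=; lia.
by exists (i, j); move: lab; rewrite !mem_iota /block_label /=; split => //; lia.
Qed.

Definition T_factor i j := if i <= h then factor (i, j) else Dset n (3 * i - n - 3 + j).

Lemma T_factorsU i : 1 <= i <= h ->
  T_factor i 1 :|: T_factor i 2 :|: T_factor i 3 = Aset n i :|: Bset n i :|: Dset n (i - 1).
Proof.
move=> lim; have le_ih : i <= h by lia.
by rewrite /T_factor le_ih block_factorsU.
Qed.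

Lemma one_factorization_T_D :
  one_factorization ([seq T_factor i j | i <- iota 1 h, j <- iota 1 3] ++
                     [seq Dset n d | d <- iota h (n - h)]).
Proof.
set D_labels := [seq (d, 0) | d <- iota h (n - h)].
have -> : [seq T_factor i j | i <- iota 1 h, j <- iota 1 3] ++
          [seq Dset n d | d <- iota h (n - h)] = map factor (block_labels ++ D_labels).
  rewrite map_cat map_allpairs -map_comp; congr cat.
    by apply/eq_in_allpairs => i j; rewrite mem_iota /T_factor => lim _; rewrite ifT //; lia.
  by apply/eq_in_map => d; rewrite mem_iota /= => lim; rewrite factor_D //; lia.
apply: one_factorization_factors.
- rewrite cat_uniq block_labels_uniq map_inj_uniq ?iota_uniq // => [|a b [] //].
  by rewrite /= andbT; apply/hasPn => k /mapP [d _ ->]; rewrite mem_block_labels /block_label andbF.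
- by rewrite size_cat size_allpairs !size_map !size_iota; lia.
move=> u v uv; rewrite mem_cat mem_block_labels.
case: (color_cases uv) => [-> //|[d lim ->]].
by apply/orP; right; apply/mapP; exists d; rewrite // mem_iota; lia.
Qed.

Lemma one_factorization_T : n %% 3 = 2 ->
  one_factorization [seq T_factor i j | i <- iota 1 ((2 * n - 1) %/ 3), j <- iota 1 3].
Proof.
move=> n_mod3; set m := (2 * n - 1) %/ 3.
pose label i j := if i <= h then (i, j) else (3 * i - n - 3 + j, 0).
have -> : [seq T_factor i j | i <- iota 1 m, j <- iota 1 3] =
          map factor [seq label i j | i <- iota 1 m, j <- iota 1 3].
  rewrite map_allpairs; apply/eq_in_allpairs => i j; rewrite !mem_iota /T_factor /label.
  by case: ifP => // ? ? ?; rewrite factor_D //; lia.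
apply: one_factorization_factors.
- apply: allpairs_uniq; rewrite ?iota_uniq // => -[a b] [c d].
  move=> /allpairsP [[a' b'] [+ + [-> ->]]] /allpairsP [[c' d'] [+ + [-> ->]]] /=.
  rewrite !mem_iota /label /=; case: ifP => ?; case: ifP => ? ? ? ? ? /eqP;
  by rewrite xpair_eqE => /andP [/eqP ? /eqP ?]; congr pair; lia.
- by rewrite size_allpairs !size_iota; lia.
move=> u v uv; apply/allpairsP; case: (color_cases uv).
  case: (color u v) => i j lab; exists (i, j); move: lab.
  by rewrite !mem_iota /block_label /label /=; case: ifP => ? ?; split => //; lia.
case=> d lim ->; exists ((d + n + 2) %/ 3, (d + n + 2) %% 3 + 1).
rewrite !mem_iota /label /=; case: ifP => ?; split => //; try lia.
by congr pair; lia.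
Qed.

End Factorization.

Theorem lemma5 (n : nat) :
  prime n -> (n %% 6 = 1 \/ n %% 6 = 5) ->
  exists T : nat -> nat -> {set {set 'I_(2 * n)}},
    (n %% 6 = 5 ->
       one_factorization
         [seq T i j | i <- iota 1 ((2 * n - 1) %/ 3), j <- iota 1 3]
       /\ (forall i, 1 <= i <= (n - 1) %/ 2 ->
             T i 1 :|: T i 2 :|: T i 3 = Aset n i :|: Bset n i :|: Dset n (i - 1))
       /\ (forall i, (n + 1) %/ 2 <= i <= (2 * n - 1) %/ 3 ->
             [/\ T i 1 = Dset n (3 * i - n - 2),
                 T i 2 = Dset n (3 * i - n - 1) &
                 T i 3 = Dset n (3 * i - n)]))
    /\
    (n %% 6 = 1 ->
       one_factorization
         ([seq T i j | i <- iota 1 ((n - 1) %/ 2), j <- iota 1 3]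
          ++ [seq Dset n i | i <- iota ((n - 1) %/ 2) (n - (n - 1) %/ 2)])
       /\ (forall i, 1 <= i <= (n - 1) %/ 2 ->
             T i 1 :|: T i 2 :|: T i 3 = Aset n i :|: Bset n i :|: Dset n (i - 1))).
Proof.
move=> _ n_mod6; have n_odd : odd n by case: n_mod6 => ?; lia.
exists (T_factor n); split=> [n_mod5|_]; last first.
  by split; [exact: one_factorization_T_D | move=> i; apply: T_factorsU].
split; first by apply: one_factorization_T; lia.
split=> i lim; first exact: T_factorsU.
have gt_ih : (i <= (n - 1) %/ 2) = false by lia.
by rewrite /T_factor gt_ih; split; congr (Dset _ _); lia.
Qed.
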